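(* Let $z(t)$, $t\in[0,T]$, be a càdlàg Markov process with values in $\mathbb{R}^m$ on $(\Omega,\mathcal{F},P)$, let $D\subset\mathbb{R}^m$ be closed, and let $\tau_t\triangleq\inf\{s\in[t,T]: z(s)\notin D\}$ (with $\inf\emptyset=\infty$). Let $0=t_0<t_1<\dots<t_k=T$ be a partition and write $z_i=z(t_i)$, $\tau_i=\tau_{t_i}$. Let $\bar b_i$ denote the law of $z_i$, and define the (regular conditional) function $\bar\Psi_i(\zeta)\triangleq P(\tau_0\ge t_i,\ z_i\in D\mid z_i=\zeta)$. For a finite (not necessarily normalized) measure $\mu$ on $\mathbb{R}^m$ define $$\Phi(t_i,t_{i+1};\mu)\triangleq\int_{\mathbb{R}^m} P(\tau_i<t_{i+1}\mid z_i=\zeta)\,\mu(d\zeta).$$ Then the exit cumulant $F(T)\triangleq P\big(\exists s\in[0,T]: z(s)\notin D\big)$ satisfies $$F(T)=\sum_{i=0}^{k-1}\Phi\big(t_i,t_{i+1};\bar\Psi_i\,\bar b_i\big)+\sum_{i=0}^{k}P\big(\tau_0=t_i,\ z_i\in D^c\big),$$ where $\bar\Psi_i\bar b_i$ denotes the measure $\bar\Psi_i(\zeta)\,\bar b_i(d\zeta)$.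
   Context: $D^c$ is the complement of $D$. The Markov property is used in the sense that, conditionally on $z(t_i)$, the future path $(z(s))_{s\ge t_i}$ is independent of $(z(s))_{s\le t_i}$. *)

From HB Require Import structures.
From mathcomp Require Import all_boot all_order all_algebra.
From mathcomp Require Import all_classical all_reals all_analysis.
Set Implicit Arguments. Unset Strict Implicit. Unset Printing Implicit Defensive.
Import Order.TTheory GRing.Theory Num.Theory.
Import numFieldNormedType.Exports.
Local Open Scope classical_set_scope.
Local Open Scope ring_scope.

Definition state (R : realType) (m : nat) := g_sigma_algebraType (@open 'rV[R]_m).

(* View a state as a vector of R^m (to use the topology of 'rV[R]_m). *)
Definition toRm (R : realType) (m : nat) (x : state R m) : 'rV[R]_m := x.

Section process.
Context (R : realType) (d : measure_display) (Omega : measurableType d) (m : nat).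
Variable (P : probability Omega R).
Variable (Z : R -> {mfun Omega >-> state R m}).

Definition cadlag (T : R) : Prop :=
  forall w : Omega,
    (forall s, 0 <= s < T ->
       (fun r => toRm (Z r w)) @ s^'+ --> toRm (Z s w)) /\
    (forall s, 0 < s <= T -> cvg ((fun r => toRm (Z r w)) @ s^'-)).

Definition tau (D : set 'rV[R]_m) (T t : R) (w : Omega) : \bar R :=
  ereal_inf [set s%:E | s in [set s | t <= s <= T /\ ~ D (toRm (Z s w))]].

Definition past (t : R) : set (set Omega) :=
  <<s [set A | exists s B, 0 <= s <= t /\ measurable B /\ A = Z s @^-1` B] >>.
Definition future (T t : R) : set (set Omega) :=
  <<s [set A | exists s B, t <= s <= T /\ measurable B /\ A = Z s @^-1` B] >>.

(* g is a (version of the) regular conditional probability  P(A | X = .),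
   i.e. P(A /\ X \in B) = \int_B g d(law of X) for every Borel B. *)
Definition cond_prob_fun (X : {mfun Omega >-> state R m}) (A : set Omega)
    (g : state R m -> R) : Prop :=
  measurable_fun [set: state R m] g /\
  forall B : set (state R m), measurable B ->
    P (A `&` X @^-1` B) = (\int[distribution P X]_(x in B) (g x)%:E)%E.

Definition markov_property (T : R) : Prop :=
  forall t, 0 <= t <= T ->
  forall A B, future T t A -> past t B ->
  forall gA gB gAB,
    cond_prob_fun (Z t) A gA -> cond_prob_fun (Z t) B gB ->
    cond_prob_fun (Z t) (A `&` B) gAB ->
    {ae P, forall w, gAB (Z t w) = gA (Z t w) * gB (Z t w)}.

Definition exit_cumulant (D : set 'rV[R]_m) (T : R) : \bar R :=
  P [set w | exists s, 0 <= s <= T /\ ~ D (toRm (Z s w))].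

(* Phi(t_i, t_{i+1}; psi b) = \int h(zeta) (psi(zeta) b(dzeta)), where
   h(zeta) = P(tau_i < t_{i+1} | z_i = zeta) and the measure psi b has
   density psi w.r.t. b. *)
Definition Phi (b : {measure set (state R m) -> \bar R}) (h psi : state R m -> R)
  : \bar R := (\int[b]_x (h x * psi x)%:E)%E.

End process.

From HB Require Import structures.
From mathcomp Require Import all_boot all_order all_algebra.
From mathcomp Require Import all_classical all_reals all_analysis.
From mathcomp Require Import measurable_realfun.
Set Implicit Arguments. Unset Strict Implicit. Unset Printing Implicit Defensive.
Set Warnings "-redundant-canonical-projection -notation-overridden -ambiguous-paths -notation-incompatible-prefix".
Import Order.TTheory GRing.Theory Num.Theory.
Import numFieldNormedType.Exports.
Local Open Scope classical_set_scope.
Local Open Scope ring_scope.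

(* Write E[a, c) for the event "the path leaves D at some time of [a, c)".
   For 0 <= b < c the event E[0, c) is the disjoint union of E[0, b), of
   "survived up to b and E[b, c)" and of "first exit exactly at b"; summing
   along the partition, and adding the first exit at T, decomposes
   F(T) = P(exit during [0, T]).  Each term P(E[t_i, t_{i+1}) /\ survived
   up to t_i) is the probability of a future event intersected with a past
   event at time t_i, which the Markov property turns into the integral
   Phi(t_i, t_{i+1}; Psi_i b_i).  Two general facts make this work:
   - every event has a regular conditional probability given z(t_i)
     (Radon-Nikodym), which the Markov property needs as an input;
   - since the paths are right-continuous and D is closed, E[a, c) is a
     countable union of events z(q) \notin D, q rational, so it is
     measurable and belongs to the sigma-algebras of past and future.
   The events of the statement, phrased with the exit times tau, are
   identified with these events at the end. *)

(* The law of a random state X restricted to an event A,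
   C |-> P(A /\ X \in C).  It is a finite measure dominated by the law of X,
   so its Radon-Nikodym derivative is a version of P(A | X = .). *)
Section restricted_law.
Local Open Scope ereal_scope.
Context {R : realType} {d : measure_display} {Omega : measurableType d}
  (P : probability Omega R) {m : nat} (X : {mfun Omega >-> state R m})
  (A : set Omega) (mA : measurable A).

Definition restricted_law (C : set (state R m)) : \bar R :=
  mrestr P mA (X @^-1` C).

Let restricted_law0 : restricted_law set0 = 0.
Proof. by rewrite /restricted_law preimage_set0 measure0. Qed.

Let restricted_law_ge0 C : 0 <= restricted_law C.
Proof. exact: measure_ge0. Qed.

Let restricted_law_sigma_additive : semi_sigma_additive restricted_law.
Proof.
move=> F mF tF mUF; rewrite /restricted_law preimage_bigcup.
apply: (@measure_semi_sigma_additive _ _ _ (mrestr P mA)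
  (fun n => X @^-1` F n)).
- by move=> n; exact: measurable_funPTI.
- apply/trivIsetP => /= i j _ _ ij; rewrite -preimage_setI.
  by move/trivIsetP : tF => /(_ _ _ _ _ ij) ->//; rewrite preimage_set0.
- by rewrite -preimage_bigcup; exact: measurable_funPTI.
Qed.

HB.instance Definition _ := isMeasure.Build _ _ _ restricted_law
  restricted_law0 restricted_law_ge0 restricted_law_sigma_additive.

Let restricted_law_le C : measurable C -> restricted_law C <= P (X @^-1` C).
Proof.
move=> mC; apply: le_measure; rewrite ?inE; last exact: subIsetl.
  by apply: measurableI => //; exact: measurable_funPTI.
exact: measurable_funPTI.
Qed.

Let restricted_law_fin : fin_num_fun restricted_law.
Proof.
move=> C mC; rewrite ge0_fin_numE// (le_lt_trans (restricted_law_le mC))//.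
rewrite (le_lt_trans (probability_le1 _ _)) ?ltry//.
exact: measurable_funPTI.
Qed.

HB.instance Definition _ :=
  Measure_isFinite.Build _ _ _ restricted_law restricted_law_fin.

Lemma cond_prob_exists : exists g, cond_prob_fun P X A g.
Proof.
pose nu : {charge set state R m -> \bar R} := restricted_law.
have numu : nu `<< distribution P X.
  apply/null_content_dominatesP => C mC lawC0.
  by apply/eqP; rewrite eq_le measure_ge0 andbT -lawC0 restricted_law_le.
pose f := Radon_Nikodym nu (distribution P X).
have f_fin x : f x \is a fin_num := Radon_Nikodym_fin_num x numu.
have mf : measurable_fun setT f :=
  measurable_int _ (Radon_Nikodym_integrable numu).
exists (fine \o f); split.
  apply/measurable_EFinP; apply: (eq_measurable_fun f) => // x _ /=.
  by rewrite fineK.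
move=> B mB; rewrite setIC.
have -> : P (X @^-1` B `&` A) = nu B by [].
rewrite (Radon_Nikodym_integral numu mB).
by apply: eq_integral => x _ /=; rewrite fineK.
Qed.

End restricted_law.

Lemma ae_eq_distribution {R : realType} {d : measure_display}
  {Omega : measurableType d} (P : probability Omega R) {m : nat}
  (X : {mfun Omega >-> state R m}) (f g : state R m -> R) :
  measurable_fun setT f -> measurable_fun setT g ->
  {ae P, forall w, f (X w) = g (X w)} ->
  ae_eq (distribution P X) setT (EFin \o f) (EFin \o g).
Proof.
move=> mf mg [N [mN PN0 sN]].
pose Neq := (fun x => f x - g x) @^-1` (~` [set 0]).
have mNeq : measurable Neq.
  by rewrite -[Neq]setTI; apply: measurable_funB => //; exact: measurableC.
exists Neq; split => //; last first.
  move=> x /= /not_implyP[_ fgx] /eqP; rewrite subr_eq0 => /eqP fg.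
  by apply: fgx; rewrite fg.
apply/eqP; rewrite eq_le measure_ge0 andbT -PN0.
change (P (X @^-1` Neq) <= P N)%E.
apply: le_measure; rewrite ?inE //; first exact: measurable_funPTI.
by move=> w /= Nw; apply: sN => /= fgw; apply: Nw; rewrite /= fgw subrr.
Qed.

Lemma markov_product {R : realType} {d : measure_display}
  {Omega : measurableType d} (P : probability Omega R) {m : nat} (T s : R)
  (Z : R -> {mfun Omega >-> state R m}) (A B : set Omega)
  (hA hB : state R m -> R) :
  0 <= s <= T -> markov_property P Z T -> future Z T s A -> past Z s B ->
  measurable A -> measurable B ->
  cond_prob_fun P (Z s) A hA -> cond_prob_fun P (Z s) B hB ->
  P (A `&` B) = Phi (distribution P (Z s)) hA hB.
Proof.
move=> hs markovZ futA pastB mA mB [mhA condA] [mhB condB].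
have mAB : measurable (A `&` B) by exact: measurableI.
have [g [mg condAB]] := cond_prob_exists P (Z s) mAB.
have ae_prod := markovZ s hs A B futA pastB hA hB g (conj mhA condA)
  (conj mhB condB) (conj mg condAB).
have mhAB : measurable_fun setT (fun x => hA x * hB x).
  exact: measurable_funM.
rewrite -[A `&` B]setIT -(preimage_setT (Z s)) condAB // /Phi.
apply: ae_eq_integral => //; [exact/measurable_EFinP..|].
exact: ae_eq_distribution.
Qed.

Section exit_events.
Context {R : realType} {d : measure_display} {Omega : measurableType d} {m : nat}.
Variables (Z : R -> {mfun Omega >-> state R m}) (D : set 'rV[R]_m) (T : R).

Definition exit_during (a c : R) : set Omega :=
  [set w | exists s, a <= s < c /\ ~ D (toRm (Z s w))].

Definition survived (c : R) : set Omega := ~` exit_during 0 c `&` Z c @^-1` D.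
Definition first_exit_at (c : R) : set Omega :=
  ~` exit_during 0 c `&` Z c @^-1` (~` D).

Lemma tau_ge_noexit a c w : c <= T ->
  (c%:E <= tau Z D T a w)%E <-> ~ exit_during a c w.
Proof.
move=> cT; split.
  move/ereal_infP => tau_ge [s [/andP[a_s sc] sD]].
  have : (c%:E <= s%:E)%E.
    apply: tau_ge; exists s => //; split => //.
    by rewrite a_s (ltW (lt_le_trans sc cT)).
  by rewrite lee_fin leNgt sc.
move=> noexit; apply/ereal_infP => _ [s [/andP[a_s _] sD] <-].
rewrite lee_fin leNgt; apply/negP => sc.
by apply: noexit; exists s; rewrite a_s sc.
Qed.

Lemma tau_lt_exit a c w : c <= T ->
  (tau Z D T a w < c%:E)%E <-> exit_during a c w.
Proof.
move=> cT; rewrite ltNge; split.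
  by move/negP => tau_lt; apply: contrapT => /(tau_ge_noexit a w cT).
by move=> exit; apply/negP => /(tau_ge_noexit a w cT).
Qed.

Lemma tau_le_exit a s w : a <= s <= T -> ~ D (toRm (Z s w)) ->
  (tau Z D T a w <= s%:E)%E.
Proof. by move=> hs sD; apply: ereal_inf_lbound; exists s. Qed.

Lemma tau_lt_event a c : c <= T ->
  [set w | (tau Z D T a w < c%:E)%E] = exit_during a c.
Proof. by move=> cT; apply/seteqP; split => w /(tau_lt_exit a w cT). Qed.

Lemma tau_survived_event c : c <= T ->
  [set w | (c%:E <= tau Z D T 0 w)%E /\ D (toRm (Z c w))] = survived c.
Proof.
by move=> cT; apply/seteqP; split => w [/(tau_ge_noexit 0 w cT) ? ?].
Qed.

Lemma tau_first_exit_event c : 0 <= c <= T ->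
  [set w | tau Z D T 0 w = c%:E /\ ~ D (toRm (Z c w))] = first_exit_at c.
Proof.
move=> /andP[c0 cT]; apply/seteqP; split => w [tau_c cD]; split => //.
  by apply/(tau_ge_noexit 0 w cT); rewrite tau_c.
apply/eqP; rewrite eq_le tau_le_exit ?c0 //=.
exact/(tau_ge_noexit 0 w cT).
Qed.

Lemma exit_during_split b c : 0 <= b < c ->
  exit_during 0 c =
  exit_during 0 b `|` ((exit_during b c `&` survived b) `|` first_exit_at b).
Proof.
move=> /andP[b0 bc]; apply/seteqP; split => w.
  move=> [s [/andP[s0 sc] sD]].
  have [before|not_before] := pselect (exit_during 0 b w); first by left.
  right; have [zbD|zb_notD] := pselect (D (toRm (Z b w))); last by right.
  left; split; last by split.
  exists s; split => //; rewrite sc andbT leNgt; apply/negP => sb.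
  by apply: not_before; exists s; rewrite s0 sb.
move=> [[s [/andP[s0 sb] sD]]|[[[s [/andP[bs sc] sD]] _]|[_ zb_notD]]].
- by exists s; rewrite s0 (lt_trans sb bc).
- by exists s; rewrite (le_trans b0 bs) sc.
- by exists b; rewrite b0 bc.
Qed.

Lemma exit_event_split : 0 <= T ->
  [set w | exists s, 0 <= s <= T /\ ~ D (toRm (Z s w))] =
  exit_during 0 T `|` first_exit_at T.
Proof.
move=> T0; apply/seteqP; split => w.
  move=> [s [/andP[s0 sT] sD]].
  have [before|not_before] := pselect (exit_during 0 T w); first by left.
  right; split => //; suff <- : s = T by [].
  apply/eqP; rewrite eq_le sT leNgt; apply/negP => sT'.
  by apply: not_before; exists s; rewrite s0 sT'.
move=> [[s [/andP[s0 sT] sD]]|[_ zT_notD]].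
- by exists s; rewrite s0 ltW.
- by exists T; rewrite T0 lexx.
Qed.

(* Sampling events z(a) \notin D and z(q) \notin D for the rationals q of
   (a, c), enumerated along nat.  By right-continuity of the paths and
   openness of the complement of D, they detect every exit during [a, c). *)
Definition exit_probe (a c : R) (n : nat) : set Omega :=
  if n is n'.+1 then
    if unpickle n' is Some q then
      if a < ratr q < c then Z (ratr q) @^-1` (~` D) else set0
    else set0
  else Z a @^-1` (~` D).

Hypothesis cadlagZ : cadlag Z T.
Hypothesis closedD : closed D.

Lemma measurable_notD : measurable (~` D : set (state R m)).
Proof. by apply: sub_sigma_algebra; exact: closed_openC. Qed.

Lemma measurable_D : measurable (D : set (state R m)).
Proof. by rewrite -[D]setCK; apply: measurableC; exact: measurable_notD. Qed.

Lemma exit_during_probes a c : 0 <= a < c -> c <= T ->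
  exit_during a c = \bigcup_n exit_probe a c n.
Proof.
move=> /andP[a0 ac] cT; apply/seteqP; split => w; last first.
  move=> [[|n] _]; rewrite /exit_probe; first by exists a; rewrite lexx ac.
  case: (unpickle n) => [q|//]; case: ifP => // /andP[aq qc] qD.
  by exists (ratr q); rewrite (ltW aq) qc.
move=> [s [/andP[a_s sc] sD]].
have [a_eq_s|a_neq_s] := eqVneq a s.
  by exists 0%N => //; rewrite /exit_probe a_eq_s.
have {a_neq_s a_s}a_lt_s : a < s by rewrite lt_neqAle a_neq_s.
have s0T : 0 <= s < T by rewrite (le_trans a0 (ltW a_lt_s)) (lt_le_trans sc cT).
have nbhs_notD : open_nbhs (toRm (Z s w)) (~` D).
  by split => //; exact: closed_openC.
have [e /= e0 near_s] := (cadlagZ w).1 s s0T _ (open_nbhs_nbhs nbhs_notD).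
have s_lt_min : s < Num.min (s + e) c by rewrite lt_min ltrDl e0 sc.
have [q] := rat_in_itvoo s_lt_min.
rewrite in_itv /= lt_min => /andP[sq /andP[qse qc]].
exists (pickle q).+1; first exact: I.
rewrite /exit_probe pickleK (lt_trans a_lt_s sq) qc /=.
by apply: near_s => //=; rewrite ltr0_norm ?subr_lt0 // opprB ltrBlDl.
Qed.

Lemma exit_during_in (S : set (set Omega)) a c : 0 <= a -> c <= T ->
  S set0 ->
  (forall F : (set Omega)^nat, (forall n, S (F n)) -> S (\bigcup_n F n)) ->
  (forall s, a <= s <= c -> S (Z s @^-1` (~` D))) -> S (exit_during a c).
Proof.
move=> a0 cT S0 S_bigcup S_probe.
have [ca|ac] := leP c a.
  suff -> : exit_during a c = set0 by [].
  apply/seteqP; split => // w [s [/andP[a_s sc] _]].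
  by have := lt_le_trans (le_lt_trans a_s sc) ca; rewrite ltxx.
rewrite exit_during_probes ?a0 ?ac //.
apply: S_bigcup => -[|n]; rewrite /exit_probe.
  by apply: S_probe; rewrite lexx ltW.
case: (unpickle n) => [q|//]; case: ifP => // /andP[aq qc].
by apply: S_probe; rewrite !ltW.
Qed.

Lemma measurable_exit_during a c : 0 <= a -> c <= T ->
  measurable (exit_during a c).
Proof.
move=> a0 cT; apply: exit_during_in => //; first exact: bigcupT_measurable.
by move=> s _; apply: measurable_funPTI; exact: measurable_notD.
Qed.

Lemma measurable_survived c : 0 <= c <= T -> measurable (survived c).
Proof.
move=> /andP[c0 cT].
apply: measurableI; last exact: measurable_funPTI measurable_D.
exact/measurableC/(measurable_exit_during (lexx 0) cT).
Qed.

Lemma measurable_first_exit_at c : 0 <= c <= T ->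
  measurable (first_exit_at c).
Proof.
move=> /andP[c0 cT].
apply: measurableI; last exact: measurable_funPTI measurable_notD.
exact/measurableC/(measurable_exit_during (lexx 0) cT).
Qed.

Lemma exit_during_future a c : 0 <= a -> c <= T ->
  future Z T a (exit_during a c).
Proof.
move=> a0 cT; apply: exit_during_in => //.
- exact: sigma_algebra0.
- by move=> F FF; exact: sigma_algebra_bigcup.
- move=> s /andP[a_s sc]; apply: sub_sigma_algebra.
  exists s, (~` D); split; first by rewrite a_s (le_trans sc cT).
  by split => //; exact: measurable_notD.
Qed.

Lemma survived_past c : 0 <= c <= T -> past Z c (survived c).
Proof.
move=> /andP[c0 cT].
apply: (@measurableI _ (g_sigma_algebraType _)); last first.
  apply: sub_sigma_algebra; exists c, D; split; first by rewrite c0 lexx.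
  by split => //; exact: measurable_D.
apply: sigma_algebraC; apply: exit_during_in => //.
- exact: sigma_algebra0.
- by move=> F FF; exact: sigma_algebra_bigcup.
- move=> s /andP[s0 sc]; apply: sub_sigma_algebra.
  exists s, (~` D); split; first by rewrite s0 sc.
  by split => //; exact: measurable_notD.
Qed.

Lemma measure_exit_split (mu : {measure set Omega -> \bar R}) b c :
  0 <= b < c -> c <= T ->
  mu (exit_during 0 c) = (mu (exit_during 0 b)
    + mu (exit_during b c `&` survived b) + mu (first_exit_at b))%E.
Proof.
move=> b0c cT; have /andP[b0 bc] := b0c; have bT := ltW (lt_le_trans bc cT).
have m0b := measurable_exit_during (lexx 0) bT.
have mbc := measurable_exit_during b0 cT.
have b0T : 0 <= b <= T by rewrite b0 bT.
have msurv := measurable_survived b0T.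
have mfirst := measurable_first_exit_at b0T.
rewrite (exit_during_split b0c) measureU //; last 2 first.
- by apply: measurableU => //; exact: measurableI.
- by apply/seteqP; split => // w [before [[_ [+ _]]|[+ _]]].
rewrite measureU ?addeA //; first exact: measurableI.
by apply/seteqP; split => // w [[_ [_ zbD]] [_ zb_notD]].
Qed.

Section partition.
Variables (k : nat) (t : nat -> R).
Hypotheses (t0 : t 0%N = 0) (tk : t k = T).
Hypothesis t_incr : forall i, (i < k)%N -> t i < t i.+1.

Lemma partition_le i j : (i <= j <= k)%N -> t i <= t j.
Proof.
elim: j => [|j IH] /andP[ij jk]; first by move: ij; rewrite leqn0 => /eqP ->.
move: ij; rewrite leq_eqVlt => /orP[/eqP -> //|]; rewrite ltnS => ij.
by rewrite (le_trans (IH _)) ?ij ?(ltnW jk) // ltW // t_incr.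
Qed.

Lemma partition_bounds i : (i <= k)%N -> 0 <= t i <= T.
Proof. by move=> ik; rewrite -t0 -tk !partition_le ?ik ?leqnn. Qed.

Lemma measure_exit_telescope (mu : {measure set Omega -> \bar R}) j :
  (j <= k)%N ->
  mu (exit_during 0 (t j)) = (\sum_(i < j)
    (mu (exit_during (t i) (t i.+1) `&` survived (t i))
     + mu (first_exit_at (t i))))%E.
Proof.
elim: j => [|j IH] jk.
  rewrite big_ord0 t0 -(measure0 mu); congr (mu _).
  apply/seteqP; split => // w [s [/andP[s0 s_lt0] _]].
  by move: (le_lt_trans s0 s_lt0); rewrite ltxx.
have /andP[tj0 _] := partition_bounds (ltnW jk).
have /andP[_ tj1T] := partition_bounds jk.
rewrite big_ord_recr /= -IH ?(ltnW jk) // addeA.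
by apply: measure_exit_split; rewrite ?tj0 ?t_incr.
Qed.

Lemma exit_cumulant_partition (P : probability Omega R) :
  exit_cumulant P Z D T =
    (\sum_(i < k) P (exit_during (t i) (t i.+1) `&` survived (t i))
     + \sum_(i < k.+1) P (first_exit_at (t i)))%E.
Proof.
have /andP[T0 _] := partition_bounds (leqnn k); rewrite tk in T0.
have T0T : 0 <= T <= T by rewrite T0 lexx.
rewrite /exit_cumulant exit_event_split // measureU //; last 3 first.
- exact: measurable_exit_during.
- exact: measurable_first_exit_at.
- by apply/seteqP; split => // w [+ [+ _]].
rewrite big_ord_recr /= addeA -big_split /= -tk; congr (_ + _)%E.
exact: measure_exit_telescope.
Qed.

End partition.
End exit_events.

Theorem mainTheorem2 (R : realType) (d : measure_display) (Omega : measurableType d)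
  (P : probability Omega R) (m : nat) (T : R)
  (Z : R -> {mfun Omega >-> state R m}) (D : set 'rV[R]_m)
  (k : nat) (t : nat -> R) (Psi h : nat -> state R m -> R) :
  cadlag Z T -> markov_property P Z T -> closed D ->
  (0 < k)%N -> t 0%N = 0 -> t k = T ->
  (forall i, (i < k)%N -> t i < t i.+1) ->
  (* Psi i = P(tau_0 >= t_i, z_i \in D | z_i = .) *)
  (forall i, (i < k)%N ->
     cond_prob_fun P (Z (t i))
       [set w | ((t i)%:E <= tau Z D T 0 w)%E /\ D (toRm (Z (t i) w))] (Psi i)) ->
  (* h i = P(tau_i < t_{i+1} | z_i = .) *)
  (forall i, (i < k)%N ->
     cond_prob_fun P (Z (t i))
       [set w | (tau Z D T (t i) w < (t i.+1)%:E)%E] (h i)) ->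
  exit_cumulant P Z D T =
    (\sum_(i < k) Phi (distribution P (Z (t i))) (h i) (Psi i)
     + \sum_(i < k.+1)
         P [set w | tau Z D T 0 w = (t i)%:E /\ ~ D (toRm (Z (t i) w))])%E.
Proof.
move=> cadlagZ markovZ closedD _ t0 tk t_incr condPsi condh.
have bounds := partition_bounds t0 tk t_incr.
rewrite (exit_cumulant_partition cadlagZ closedD t0 tk t_incr P).
congr (_ + _)%E; apply: eq_bigr => -[i /= ik] _; last first.
  by rewrite tau_first_exit_event // bounds.
have ti_bounds := bounds i (ltnW ik); case/andP: (ti_bounds) => ti0 tiT.
have /andP[_ ti1T] := bounds i.+1 ik.
have := condh i ik; rewrite tau_lt_event // => cond_exit.
have := condPsi i ik; rewrite tau_survived_event // => cond_survived.
apply: (markov_product ti_bounds markovZ _ _ _ _ cond_exit cond_survived).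
- exact: (exit_during_future cadlagZ closedD ti0 ti1T).
- exact: (survived_past cadlagZ closedD ti_bounds).
- exact: (measurable_exit_during cadlagZ closedD ti0 ti1T).
- exact: (measurable_survived cadlagZ closedD ti_bounds).
Qed.
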